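(* A finite group $G$ is mixable if and only if every nontrivial irreducible complex representation of $G$ is mixable.
   Context: A finite group $G$ is mixable if there exist fixed elements $g_1,\dots,g_k\in G$ and independent Bernoulli random variables $\epsilon_i\sim\mathrm{Ber}(p_i)$, $p_i\in[0,1]$, such that $g_1^{\epsilon_1}\cdots g_k^{\epsilon_k}$ is distributed exactly uniformly on $G$. An irreducible representation $\rho: G\to\mathrm{GL}_d(\mathbb{C})$ is mixable if there exist $g_1,\dots,g_k\in G$ and $p_1,\dots,p_k\in[0,1]$ with $\prod_{i=1}^k\big((1-p_i)I+p_i\rho(g_i)\big)=0$. (Equivalently, the theorem says $G$ is mixable iff its regular representation is mixable, a representation being called mixable when all its nontrivial irreducible components are.) *)

From HB Require Import structures.
From mathcomp Require Import all_boot all_order all_algebra all_fingroup.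
From mathcomp Require Import mxrepresentation.
From mathcomp Require Import reals.
From mathcomp Require Import complex.
Set Implicit Arguments. Unset Strict Implicit. Unset Printing Implicit Defensive.
Import Order.TTheory GRing.Theory Num.Theory.
Local Open Scope ring_scope.

(* Probability that g_0^{e_0} * ... * g_{k-1}^{e_{k-1}} equals x, where the
   e_i ~ Ber(p_i) are independent. *)
Definition word_prob (R : realType) (gT : finGroupType) (k : nat)
    (g : 'I_k -> gT) (p : 'I_k -> R) (x : gT) : R :=
  \sum_(e : {ffun 'I_k -> bool} |
          (\prod_(i < k) (if e i then g i else 1))%g == x)
     \prod_(i < k) (if e i then p i else 1 - p i).

Definition group_mixable (R : realType) (gT : finGroupType) (G : {group gT}) :=
  exists (k : nat) (g : 'I_k -> gT) (p : 'I_k -> R),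
    [/\ forall i, g i \in G,
        forall i, 0 <= p i <= 1
      & forall x, x \in G -> word_prob g p x = #|G|%:R^-1].

Definition rep_mixable (R : realType) (gT : finGroupType) (G : {group gT})
    (n : nat) (rG : mx_representation R[i] G n) :=
  exists (k : nat) (g : 'I_k -> gT) (p : 'I_k -> R),
    [/\ forall i, g i \in G,
        forall i, 0 <= p i <= 1
      & \big[mulmx/1%:M]_(i < k)
           ((Complex (1 - p i) 0)%:M + Complex (p i) 0 *: rG (g i))
        = 0 :> 'M[R[i]]_n].

Definition rep_trivial (R : realType) (gT : finGroupType) (G : {group gT})
    (n : nat) (rG : mx_representation R[i] G n) :=
  forall x, x \in G -> rG x = 1%:M.

From HB Require Import structures.
From mathcomp Require Import all_boot all_order all_algebra all_fingroup.
From mathcomp Require Import pgroup mxrepresentation.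
From mathcomp Require Import reals.
From mathcomp Require Import complex.
From Stdlib Require Import Classical.
Set Implicit Arguments. Unset Strict Implicit. Unset Printing Implicit Defensive.
Import Order.TTheory GRing.Theory Num.Theory.
Local Open Scope ring_scope.

(* In the group algebra, the word prod_i ((1 - p_i) + p_i g_i)
   equals sum_x P(x) x, where P is the law of the random subproduct
   g_1^e_1 ... g_k^e_k.  If P is uniform, a representation sends the word to
   a multiple of sum_x rho(x), which vanishes on every nontrivial irreducible.
   Conversely, say that a word absorbs a submodule U when it maps U into the
   G-fixed vectors.  Words are stable on submodules and fix the fixed vectors,
   so concatenating words that kill (or, for trivial constituents, absorb) the
   simple summands of a semisimple module gives a word absorbing the whole
   module.  By Maschke's theorem this applies to the regular representation,
   and a word W absorbing it satisfies W x = W for all x, i.e. P is constant. *)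

Section WordWeight.

Variables (F : comNzRingType) (gT : finGroupType).

Definition word_weight k (g : 'I_k -> gT) (c : 'I_k -> F) (x : gT) : F :=
  \sum_(e : {ffun 'I_k -> bool} |
          (\prod_(i < k) (if e i then g i else 1))%g == x)
     \prod_(i < k) (if e i then c i else 1 - c i).

Lemma sum_word_weight (G : {group gT}) k (g : 'I_k -> gT) (c : 'I_k -> F) :
  (forall i, g i \in G) -> \sum_(x in G) word_weight g c x = 1.
Proof.
move=> gG.
have <- : \prod_(i < k) \sum_(b : bool) (if b then c i else 1 - c i) = 1.
  by rewrite big1 // => i _; rewrite big_bool /= addrC subrK.
rewrite bigA_distr_bigA (partition_big
  (fun e : {ffun 'I_k -> bool} => \prod_(i < k) (if e i then g i else 1))%g
  (mem G)) //= => e _.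
by apply: group_prod => i _; case: (e i).
Qed.

End WordWeight.

Lemma rmorph_word_weight (F F' : comNzRingType) (gT : finGroupType)
    (f : {rmorphism F -> F'}) k (g : 'I_k -> gT) (c : 'I_k -> F) x :
  f (word_weight g c x) = word_weight g (f \o c) x.
Proof.
rewrite rmorph_sum; apply: eq_bigr => e _; rewrite rmorph_prod.
by apply: eq_bigr => i _; case: (e i); rewrite /= ?rmorphB ?rmorph1.
Qed.

Lemma word_probE (R : realType) (gT : finGroupType)
    k (g : 'I_k -> gT) (p : 'I_k -> R) x :
  word_prob g p x = word_weight g p x.
Proof. by []. Qed.

Section MixingMatrix.

Variables (F : comUnitRingType) (gT : finGroupType) (G : {group gT}) (n : nat).
Variable rG : mx_representation F G n.

Definition mix_mx (s : seq (gT * F)) : 'M[F]_n :=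
  \prod_(u <- s) ((1 - u.2)%:M + u.2 *: rG u.1).

Lemma mix_mx_cat s1 s2 : mix_mx (s1 ++ s2) = mix_mx s1 *m mix_mx s2.
Proof. exact: big_cat. Qed.

Lemma mix_mx_ord k (g : 'I_k -> gT) (c : 'I_k -> F) :
  mix_mx [seq (g i, c i) | i <- enum 'I_k] =
  \prod_(i < k) ((1 - c i)%:M + c i *: rG (g i)).
Proof. by rewrite /mix_mx big_map enumT [index_enum _]unlock. Qed.

Lemma prod_scale_repr (I : Type) (r : seq I) (a : I -> F) (h : I -> gT) :
    (forall i, h i \in G) ->
  \prod_(i <- r) (a i *: rG (h i)) =
  (\prod_(i <- r) a i) *: rG (\prod_(i <- r) h i)%g.
Proof.
move=> hG; elim: r => [|i r IHr]; first by rewrite !big_nil scale1r repr_mx1.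
rewrite !big_cons IHr -mulmxE -scalemxAl -scalemxAr scalerA repr_mxM //.
by apply: group_prod => j _.
Qed.

Lemma mix_mx_expand k (g : 'I_k -> gT) (c : 'I_k -> F) :
    (forall i, g i \in G) ->
  \prod_(i < k) ((1 - c i)%:M + c i *: rG (g i)) =
  \sum_(x in G) word_weight g c x *: rG x.
Proof.
move=> gG; have letterE i : (1 - c i)%:M + c i *: rG (g i) =
    \sum_(b : bool) (if b then c i else 1 - c i) *: rG (if b then g i else 1%g).
  by rewrite big_bool /= repr_mx1 scalemx1 addrC.
rewrite (eq_bigr _ (fun i _ => letterE i)) bigA_distr_bigA /=.
rewrite (partition_big
  (fun e : {ffun 'I_k -> bool} => \prod_(i < k) (if e i then g i else 1))%g
  (mem G)) /=; last by move=> e _; apply: group_prod => i _; case: (e i).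
apply: eq_bigr => x _; rewrite scaler_suml; apply: eq_bigr => e /eqP <-.
by apply: prod_scale_repr => i; case: (e i).
Qed.

End MixingMatrix.

Section MixingModules.

Variables (F : fieldType) (gT : finGroupType) (G : {group gT}) (n : nat).
Variable rG : mx_representation F G n.
Implicit Type s : seq (gT * F).

Lemma mix_mx_rfix m (Y : 'M_(m, n)) s :
  all [pred u | u.1 \in G] s -> (Y <= rfix_mx rG G)%MS -> Y *m mix_mx rG s = Y.
Proof.
move=> + /rfix_mxP fixY; elim: s => [|[x c] s IHs] /=.
  by rewrite /mix_mx big_nil mulmx1.
case/andP=> xG sG; rewrite /mix_mx big_cons -mulmxE mulmxA mulmxDr.
by rewrite mul_mx_scalar -scalemxAr fixY // -scalerDl subrK scale1r IHs.
Qed.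

Lemma mix_mx_module (U : 'M_n) m (Y : 'M_(m, n)) s :
    mxmodule rG U -> all [pred u | u.1 \in G] s ->
  (Y <= U)%MS -> (Y *m mix_mx rG s <= U)%MS.
Proof.
move=> modU; elim: s Y => [|[x c] s IHs] Y /=.
  by rewrite /mix_mx big_nil mulmx1.
case/andP=> xG sG sYU; rewrite /mix_mx big_cons -mulmxE mulmxA IHs //.
rewrite mulmxDr mul_mx_scalar -scalemxAr addmx_sub ?scalemx_sub //.
exact: mxmodule_trans.
Qed.

Lemma val_submod_mix_mx (U : 'M_n) (modU : mxmodule rG U) m
    (v : 'M_(m, \rank U)) s :
    all [pred u | u.1 \in G] s ->
  val_submod (v *m mix_mx (submod_repr modU) s) = val_submod v *m mix_mx rG s.
Proof.
elim: s v => [|[x c] s IHs] v /=; first by rewrite /mix_mx !big_nil !mulmx1.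
case/andP=> xG sG; rewrite /mix_mx !big_cons -!mulmxE !mulmxA IHs //.
rewrite !mulmxDr !mul_mx_scalar -!scalemxAr linearD !linearZ /=.
by rewrite val_submodJ.
Qed.

End MixingModules.

Lemma rfix_irr_nontrivial (F : fieldType) (gT : finGroupType) (G : {group gT})
    n (rG : mx_representation F G n) :
    mx_irreducible rG -> ~ (forall x, x \in G -> rG x = 1%:M) ->
  rfix_mx rG G = 0.
Proof.
move=> irrG ntG; have [//|nz_fix] := eqVneq (rfix_mx rG G) 0.
have [_ /(_ _ (rfix_mx_module rG) nz_fix) full_fix] := (mx_irrP rG).1 irrG.
have /rfix_mxP fix1 : (1%:M <= rfix_mx rG G)%MS by rewrite sub1mx.
by case: ntG => x /fix1; rewrite mul1mx.
Qed.

Lemma sum_repr_irr_nontrivial (F : fieldType) (gT : finGroupType)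
    (G : {group gT}) n (rG : mx_representation F G n) :
    mx_irreducible rG -> ~ (forall x, x \in G -> rG x = 1%:M) ->
  \sum_(x in G) rG x = 0.
Proof.
move=> irrG ntG; apply/eqP; rewrite -submx0.
rewrite -[X in (_ <= X)%MS](rfix_irr_nontrivial irrG ntG).
apply/rfix_mxP => h hG; rewrite mulmx_suml (reindex_inj (mulIg h^-1%g)) /=.
apply: eq_big => [x | x xG]; first by rewrite groupMr ?groupV.
by rewrite -repr_mxM ?mulgKV // groupMr ?groupV.
Qed.

Section Absorption.

Variables (F : fieldType) (gT : finGroupType) (G : {group gT}) (P : pred F).

Definition word_in (s : seq (gT * F)) := all [pred u | (u.1 \in G) && P u.2] s.

Lemma word_in_group s : word_in s -> all [pred u | u.1 \in G] s.
Proof. by apply: sub_all => u /andP[]. Qed.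

Lemma word_in_cat s1 s2 : word_in (s1 ++ s2) = word_in s1 && word_in s2.
Proof. exact: all_cat. Qed.

Hypothesis charF : pgroup [pchar F]^' G.
Hypothesis mixable_irr : forall n (rG : mx_representation F G n),
  mx_irreducible rG -> ~ (forall x, x \in G -> rG x = 1%:M) ->
  exists2 s, word_in s & mix_mx rG s = 0.

Variables (n : nat) (rG : mx_representation F G n).

Lemma absorb_simple U : mxsimple rG U ->
  exists2 s, word_in s & (U *m mix_mx rG s <= rfix_mx rG G)%MS.
Proof.
move=> simU; have [modU _ _] := simU.
have [fixU | nfixU] := boolP (U <= rfix_mx rG G)%MS.
  by exists [::]; rewrite // /mix_mx big_nil mulmx1.
have [trivU | s ws mix0] := mixable_irr ((submod_mx_irr modU).2 simU).
  case/negP: nfixU; rewrite -(val_submod1 U); apply/rfix_mxP => x xG.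
  by rewrite -val_submodJ // trivU // mulmx1.
exists s; rewrite // -(eqmxMr _ (val_submod1 U)) -val_submod_mix_mx.
  by rewrite mix0 mulmx0 linear0 sub0mx.
exact: word_in_group.
Qed.

Lemma absorb_semisimple V : mxsemisimple rG V ->
  exists2 s, word_in s & (V *m mix_mx rG s <= rfix_mx rG G)%MS.
Proof.
case=> I U_ W simU defV _.
suff [s ws absW] : exists2 s, word_in s &
    ((\sum_i U_ i)%MS *m mix_mx rG s <= rfix_mx rG G)%MS.
  by exists s; rewrite // -(eqmxMr _ defV).
elim: (index_enum I) => [|i r [s ws absW]].
  by exists [::]; rewrite // big_nil mul0mx sub0mx.
have [si wsi absi] := absorb_simple (simU i).
exists (si ++ s); first by rewrite word_in_cat wsi.
rewrite big_cons mix_mx_cat addsmxMr addsmx_sub !mulmxA.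
rewrite mix_mx_rfix ?word_in_group // absi /=.
apply: submx_trans absW; rewrite submxMr // mix_mx_module ?word_in_group //.
by apply: sumsmx_module => j _; case: (simU j).
Qed.

Lemma absorb_repr : exists2 s, word_in s &
  forall x, x \in G -> mix_mx rG s *m rG x = mix_mx rG s.
Proof.
(* Semisimplicity is only available classically, by elimination into bool. *)
apply: NNPP => no_word; suff : false by [].
apply: (mx_reducible_semisimple (mxmodule1 rG) (mx_Maschke_pchar rG charF)).
move=> /absorb_semisimple[s ws]; rewrite mul1mx => /rfix_mxP absW.
by case: no_word; exists s.
Qed.

End Absorption.

Section RegularRepresentation.

Variables (F : fieldType) (gT : finGroupType) (G : {group gT}).
Implicit Type w : gT -> F.
Local Notation aG := (regular_repr F G).

Lemma gring_proj_sum w x :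
  x \in G -> gring_proj x (\sum_(y in G) w y *: aG y) = (w x)%:M.
Proof.
move=> xG; rewrite linear_sum (bigD1 x) // linearZ /= gring_projE // eqxx.
rewrite scalemx1 big1 ?addr0 // => y /andP[yG nyx].
by rewrite linearZ /= gring_projE // eq_sym (negbTE nyx) scaler0.
Qed.

Lemma regular_absorbing_const w :
    (forall h, h \in G ->
       (\sum_(y in G) w y *: aG y) *m aG h = \sum_(y in G) w y *: aG y) ->
  {in G, forall x, w x = w 1%g}.
Proof.
move=> absA h hG.
suff : (w h)%:M = (w 1%g)%:M :> 'M_1 by move/matrixP/(_ 0 0); rewrite !mxE.
rewrite -(gring_proj_sum w hG) -(absA h hG).
rewrite mulmx_suml (reindex_inj (mulIg h^-1%g)) /=.
rewrite (eq_big (mem G) (fun y => w (y * h^-1)%g *: aG y)) => [|y|y yG].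
- by rewrite gring_proj_sum // mulgV.
- by rewrite groupMr ?groupV.
by rewrite -scalemxAl -repr_mxM ?mulgKV // groupMr ?groupV.
Qed.

End RegularRepresentation.

Lemma uniform_of_const (F : numFieldType) (gT : finGroupType) (G : {group gT})
    (w : gT -> F) :
    {in G, forall x, w x = w 1%g} -> \sum_(x in G) w x = 1 ->
  {in G, forall x, w x = #|G|%:R^-1}.
Proof.
move=> constw sum1 x xG; rewrite constw //.
rewrite (eq_bigr (fun _ => w 1%g)) in sum1; last exact: constw.
rewrite sumr_const -mulr_natr in sum1.
have nzG : #|G|%:R != 0 :> F by rewrite pnatr_eq0 -lt0n cardG_gt0.
by apply: (mulIf nzG); rewrite sum1 mulVf.
Qed.

Section RealWords.

Variables (R : realType) (gT : finGroupType) (G : {group gT}).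
Local Open Scope complex_scope.

(* In the partial order of R[i], 0 <= z forces z to be real. *)
Definition unit_interval := [pred z : R[i] | 0 <= z <= 1].

Definition real_word k (g : 'I_k -> gT) (p : 'I_k -> R) : seq (gT * R[i]) :=
  [seq (g i, (p i)%:C) | i <- enum 'I_k].

Lemma real_word_in k (g : 'I_k -> gT) (p : 'I_k -> R) :
    (forall i, g i \in G) -> (forall i, 0 <= p i <= 1) ->
  word_in G unit_interval (real_word g p).
Proof.
move=> gG p01; apply/allP => _ /mapP[i _ ->] /=.
by rewrite gG ler0c -(rmorph1 (real_complex R)) lecR p01.
Qed.

Lemma real_complex_Re (z : R[i]) : 0 <= z -> (complex.Re z)%:C = z.
Proof. by case: z => a b /ger0_Im /= ->. Qed.

Lemma real_word_of_word_in s : word_in G unit_interval s ->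
  exists k (g : 'I_k -> gT) (p : 'I_k -> R),
    [/\ forall i, g i \in G, forall i, 0 <= p i <= 1 & s = real_word g p].
Proof.
move=> /allP ws; pose t := in_tuple s.
have tP i : [/\ (tnth t i).1 \in G, 0 <= (tnth t i).2 & (tnth t i).2 <= 1].
  by apply/and3P; apply: ws; apply: mem_tnth.
exists (size s), (fun i => (tnth t i).1), (fun i => complex.Re (tnth t i).2).
split=> [i | i | ]; first by case: (tP i).
  have [_ ge0 le1] := tP i.
  by rewrite -ler0c -lecR rmorph1 real_complex_Re // ge0 le1.
rewrite /real_word -[LHS](map_tnth_enum t); apply: eq_map => i.
by have [_ ge0 _] := tP i; rewrite real_complex_Re //; case: (tnth t i).
Qed.

Lemma mix_mx_real_word n (rG : mx_representation R[i] G n)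
    k (g : 'I_k -> gT) (p : 'I_k -> R) :
  mix_mx rG (real_word g p) =
  \big[mulmx/1%:M]_(i < k)
    ((Complex (1 - p i) 0)%:M + Complex (p i) 0 *: rG (g i)).
Proof.
rewrite mix_mx_ord; apply: eq_bigr => i _.
by rewrite !complexr0 [(1 - _)%:C]rmorphB rmorph1.
Qed.

Lemma rep_mixable_word n (rG : mx_representation R[i] G n) :
  rep_mixable rG <-> exists2 s, word_in G unit_interval s & mix_mx rG s = 0.
Proof.
split=> [[k [g [p [gG p01 mix0]]]] | [s]].
  by exists (real_word g p); rewrite ?real_word_in // mix_mx_real_word.
case/real_word_of_word_in=> k [g [p [gG p01 ->]]] mix0.
by exists k, g, p; split; rewrite // -mix_mx_real_word.
Qed.

Lemma mix_mx_real_word_expand n (rG : mx_representation R[i] G n)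
    k (g : 'I_k -> gT) (p : 'I_k -> R) :
    (forall i, g i \in G) ->
  mix_mx rG (real_word g p) = \sum_(x in G) (word_prob g p x)%:C *: rG x.
Proof.
move=> gG; rewrite mix_mx_ord mix_mx_expand //; apply: eq_bigr => x _.
by rewrite word_probE rmorph_word_weight.
Qed.

End RealWords.

Lemma pchar_num_group (F : numFieldType) (gT : finGroupType) (G : {group gT}) :
  pgroup [pchar F]^' G.
Proof. by apply/pgroupP => p _ _; rewrite inE /= pchar_num. Qed.

Theorem mainTheorem12 (R : realType) (gT : finGroupType) (G : {group gT}) :
  group_mixable R G <->
  (forall (n : nat) (rG : mx_representation R[i] G n),
      mx_irreducible rG -> ~ rep_trivial rG -> rep_mixable rG).
Proof.
split=> [[k [g [p [gG p01 unif]]]] n rG irrG ntG | mixable_irr].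
  apply/rep_mixable_word; exists (real_word g p); first exact: real_word_in.
  rewrite mix_mx_real_word_expand //; under eq_bigr => x xG do rewrite unif //.
  by rewrite -scaler_sumr sum_repr_irr_nontrivial // scaler0.
have irr_words n (rG : mx_representation R[i] G n) :
    mx_irreducible rG -> ~ rep_trivial rG ->
  exists2 s, word_in G (unit_interval R) s & mix_mx rG s = 0.
  by move=> irrG /(mixable_irr n rG irrG)/rep_mixable_word.
have [s ws absG] :=
  absorb_repr (pchar_num_group R[i] G) irr_words (regular_repr R[i] G).
have [k [g [p [gG p01 def_s]]]] := real_word_of_word_in ws.
exists k, g, p; split=> //.
apply: uniform_of_const; last exact: sum_word_weight.
move=> x xG; apply: (@complexI R).
rewrite def_s mix_mx_real_word_expand // in absG.
exact: (regular_absorbing_const absG).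
Qed.
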